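(* Let $K$ be a differential field of characteristic $0$ and let $M$ be a differential module over $K$ of dimension $6$. The following are equivalent: (1) $M\cong \Lambda^2N$ for some differential module $N$ of dimension $4$ with $\det N=\mathbf{1}$. (2) There exists $F\in \mathrm{sym}^2M$ with $\partial F=0$ such that $F$ is non degenerate and has a totally isotropic subspace of dimension $3$.
   Context: A differential module over $K$ is a finite-dimensional $K$-vector space with an additive map $\partial$ satisfying the Leibniz rule; $\mathrm{sym}^2M$ and $\Lambda^2N$ carry the induced derivations, $\det N=\Lambda^{\dim N}N$, and $\mathbf{1}$ is the trivial one-dimensional module. An element $F\in\mathrm{sym}^2M$ defines a symmetric bilinear form $(a,b)=F(a\otimes b)$ on $M^*$; non degenerate and totally isotropic subspace refer to this form (equivalently, $F$ is a quadratic form in a basis of $M$). *)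

From HB Require Import structures.
From mathcomp Require Import all_boot all_order all_algebra.
Set Implicit Arguments. Unset Strict Implicit. Unset Printing Implicit Defensive.
Import Order.TTheory GRing.Theory Num.Theory.
Local Open Scope ring_scope.

Definition derivation (K : fieldType) (d : K -> K) : Prop :=
  (forall x y, d (x + y) = d x + d y) /\ (forall x y, d (x * y) = d x * y + x * d y).

(* A differential module of dimension n over (K,d), presented in a basis:
   the carrier is K^n (column vectors 'cV_n) and D is an additive map
   satisfying the Leibniz rule.  Every n-dimensional differential module is
   isomorphic to one of this form. *)
Definition dmod_der (K : fieldType) (d : K -> K) (n : nat)
    (D : 'cV[K]_n -> 'cV[K]_n) : Prop :=
  (forall u v, D (u + v) = D u + D v) /\
  (forall (a : K) u, D (a *: u) = d a *: u + a *: D u).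

Definition ebase {K : fieldType} (n : nat) (i : 'I_n) : 'cV[K]_n := delta_mx i 0.

(* Induced derivation on M (x) M, whose elements are n x n matrices
   T = \sum_ij T_ij e_i (x) e_j  (e_i (x) e_j <-> e_i e_j^T):
   d(T) = \sum_ij d(T_ij) e_i(x)e_j + T_ij (De_i (x) e_j + e_i (x) De_j). *)
Definition tensor_der (K : fieldType) (d : K -> K) (n : nat)
    (D : 'cV[K]_n -> 'cV[K]_n) (T : 'M[K]_n) : 'M[K]_n :=
  \sum_(i < n) \sum_(j < n)
     (d (T i j) *: (ebase i *m (ebase j)^T)
      + T i j *: (D (ebase i) *m (ebase j)^T + ebase i *m (D (ebase j))^T)).

(* sym^2 M (char 0) = symmetric tensors, Lambda^2 M = antisymmetric tensors,
   both as differential submodules of M (x) M with tensor_der. *)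
Definition is_sym2 (K : fieldType) (n : nat) (T : 'M[K]_n) : Prop := T^T = T.
Definition is_alt2 (K : fieldType) (n : nat) (T : 'M[K]_n) : Prop := T^T = - T.

(* Induced derivation on det N = Lambda^n N, which is 1-dimensional with basis
   w0 = e_1 /\ ... /\ e_n.  For c w0:
   d(c w0) = d(c) w0 + c \sum_k e_1/\../\De_k/\../\e_n, and
   e_1/\../\De_k/\../\e_n = det[e_1,..,De_k,..,e_n] w0.
   We return the coordinate of d(c w0) on w0. *)
Definition det_der (K : fieldType) (d : K -> K) (n : nat)
    (D : 'cV[K]_n -> 'cV[K]_n) (c : K) : K :=
  d c + c * \sum_(k < n)
     \det (\matrix_(i < n, j < n) (if j == k then D (ebase k) i 0
                                   else (1%:M : 'M[K]_n) i j)).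

(* det N = 1 : det N is isomorphic to the trivial module, i.e. has a nonzero
   horizontal element. *)
Definition det_trivial (K : fieldType) (d : K -> K) (n : nat)
    (D : 'cV[K]_n -> 'cV[K]_n) : Prop :=
  exists c : K, c != 0 /\ det_der d D c = 0.

Definition iso_to_Lambda2 (K : fieldType) (d : K -> K) (m n : nat)
    (DM : 'cV[K]_m -> 'cV[K]_m) (DN : 'cV[K]_n -> 'cV[K]_n) : Prop :=
  exists phi : 'cV[K]_m -> 'M[K]_n,
    (forall (a : K) u v, phi (a *: u + v) = a *: phi u + phi v) /\
    injective phi /\
    (forall u, is_alt2 (phi u)) /\
    (forall T, is_alt2 T -> exists u, phi u = T) /\
    (forall u, phi (DM u) = tensor_der d DN (phi u)).

(* The symmetric bilinear form on M^* (row vectors) defined by F in sym^2 M: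
   (a, b) = F(a (x) b) = a F b^T. *)
Definition sform (K : fieldType) (n : nat) (F : 'M[K]_n) (a b : 'rV[K]_n) : K :=
  (a *m F *m b^T) 0 0.

Definition nondeg_form (K : fieldType) (n : nat) (F : 'M[K]_n) : Prop :=
  forall a : 'rV[K]_n, (forall b, sform F a b = 0) -> a = 0.

Definition totally_isotropic (K : fieldType) (n : nat) (F : 'M[K]_n)
    (W : 'M[K]_n) : Prop :=
  forall a b : 'rV[K]_n, (a <= W)%MS -> (b <= W)%MS -> sform F a b = 0.

From HB Require Import structures.
From mathcomp Require Import all_boot all_order all_algebra.
From mathcomp Require Import ring.
Set Implicit Arguments. Unset Strict Implicit. Unset Printing Implicit Defensive.
Import GRing.Theory.
Local Open Scope ring_scope.

(* Identify Lambda^2 K^4 with K^6 by Pluecker coordinates.  The wedge pairing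
   Lambda^2 x Lambda^2 -> Lambda^4 = det becomes a split quadratic form J, and a
   connection matrix B of N induces on Lambda^2 N the matrix L(B) with
   L(B) J + J L(B)^T = (tr B) J; conversely every A with A J + J A^T = 0 is L(B)
   for a traceless B (so(6) = sl(4)).
   (1) -> (2): the wedge pairing transported to M is horizontal up to tr B, so its
   product with a horizontal element of det N is a horizontal split form.
   (2) -> (1): a nondegenerate symmetric form with a 3-dimensional totally isotropic
   subspace is congruent to J; in such a basis the connection of M is
   antisymmetric for J, hence equal to L(B) with tr B = 0, and B is the connection
   of the required N. *)

Section Derivation.

Variables (K : fieldType) (d : K -> K).
Hypothesis hd : derivation d.

Lemma derivationD x y : d (x + y) = d x + d y.
Proof. by case: hd. Qed.

Lemma derivationM x y : d (x * y) = d x * y + x * d y.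
Proof. by case: hd. Qed.

Lemma derivation0 : d 0 = 0.
Proof. by apply: (addrI (d 0)); rewrite -derivationD !addr0. Qed.

Lemma derivation1 : d 1 = 0.
Proof.
have := derivationM 1 1; rewrite !mulr1 mul1r => h.
by apply: (addrI (d 1)); rewrite -h addr0.
Qed.

Lemma derivationN x : d (- x) = - d x.
Proof. by apply: (addrI (d x)); rewrite -derivationD !subrr derivation0. Qed.

Lemma derivation_sum (I : Type) (r : seq I) (P : pred I) (F : I -> K) :
  d (\sum_(i <- r | P i) F i) = \sum_(i <- r | P i) d (F i).
Proof. exact: (big_morph d derivationD derivation0). Qed.

Lemma derivation_bool (b : bool) : d b%:R = 0.
Proof. by case: b; rewrite ?derivation1 ?derivation0. Qed.

Section Matrices.

Variables m n p : nat.
Implicit Types (A B : 'M[K]_(m, n)).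

Lemma der_mxD A B : map_mx d (A + B) = map_mx d A + map_mx d B.
Proof. by apply/matrixP=> i j; rewrite !mxE derivationD. Qed.

Lemma der_mxZ (a : K) A : map_mx d (a *: A) = d a *: A + a *: map_mx d A.
Proof. by apply/matrixP=> i j; rewrite !mxE derivationM. Qed.

Lemma der_mxM A (C : 'M[K]_(n, p)) :
  map_mx d (A *m C) = map_mx d A *m C + A *m map_mx d C.
Proof.
apply/matrixP=> i j; rewrite !mxE derivation_sum -big_split /=.
by apply: eq_bigr => k _; rewrite derivationM !mxE.
Qed.

Lemma der_mx_delta (i : 'I_m) (j : 'I_n) : map_mx d (delta_mx i j) = 0.
Proof. by apply/matrixP=> a b; rewrite !mxE derivation_bool. Qed.

End Matrices.

Definition tensor_der_mx n (A T : 'M[K]_n) : 'M[K]_n :=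
  map_mx d T + A *m T + T *m A^T.

Lemma tensor_der_mxZ n (A T : 'M[K]_n) (c : K) :
  tensor_der_mx A (c *: T) = d c *: T + c *: tensor_der_mx A T.
Proof.
by rewrite /tensor_der_mx der_mxZ -scalemxAr -scalemxAl !scalerDr !addrA.
Qed.

(* [A' P = P A - P'] says that [A'] is the connection matrix after the change
   of basis [P]. *)
Lemma tensor_der_mx_gauge n (P A A' T : 'M[K]_n) :
  A' *m P = P *m A - map_mx d P ->
  tensor_der_mx A' (P *m T *m P^T) = P *m tensor_der_mx A T *m P^T.
Proof.
move=> hA'; rewrite /tensor_der_mx !der_mxM -map_trmx !mulmxA hA'.
rewrite -(mulmxA (P *m T)) -trmx_mul hA' linearB /= trmx_mul.
rewrite !(mulmxDl, mulmxDr, mulmxBl, mulmxBr, mulNmx, mulmxN) !mulmxA.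
rewrite -addrA addrACA (addrC (P *m T *m _)) subrK.
by rewrite (addrC (map_mx d P *m _ *m _)) addrACA subrr addr0.
Qed.

End Derivation.

Section ConnectionMatrix.

Variable K : fieldType.

Lemma mulmx_ebase m n (B : 'M[K]_(m, n)) j : B *m ebase j = col j B.
Proof. by rewrite colE. Qed.

Lemma sum_ebase n (v : 'cV[K]_n) : \sum_k v k 0 *: ebase k = v.
Proof.
by rewrite [RHS]matrix_sum_delta; apply: eq_bigr => k _; rewrite big_ord1.
Qed.

Definition conn_mx n (D : 'cV[K]_n -> 'cV[K]_n) : 'M[K]_n :=
  \matrix_(i, j) D (ebase j) i 0.

Lemma col_conn_mx n (D : 'cV[K]_n -> 'cV[K]_n) j : col j (conn_mx D) = D (ebase j).
Proof. by apply/colP => i; rewrite !mxE. Qed.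

Lemma additive_sum_ebase n (f : 'cV[K]_n -> 'cV[K]_n) :
  (forall u v, f (u + v) = f u + f v) ->
  forall v, f v = \sum_k f (v k 0 *: ebase k).
Proof.
move=> fD v; have f0 : f 0 = 0 by apply: (addrI (f 0)); rewrite -fD !addr0.
by rewrite -{1}(sum_ebase v); apply: (big_morph f fD f0).
Qed.

Lemma linear_conn_mx n (f : 'cV[K]_n -> 'cV[K]_n) :
  (forall (a : K) u v, f (a *: u + v) = a *: f u + f v) ->
  forall u, f u = conn_mx f *m u.
Proof.
move=> f_lin u; have f0 : f 0 = 0.
  have := f_lin 1 0 0; rewrite !scale1r !addr0 => e.
  by apply: (addrI (f 0)); rewrite -e addr0.
have fD v w : f (v + w) = f v + f w by have := f_lin 1 v w; rewrite !scale1r.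
rewrite (additive_sum_ebase fD) -{2}(sum_ebase u) mulmx_sumr; apply: eq_bigr => k _.
have := f_lin (u k 0) (ebase k) 0; rewrite f0 !addr0 => ->.
by rewrite -scalemxAr mulmx_ebase col_conn_mx.
Qed.

Lemma mx_ebaseP m n (X Y : 'M[K]_(m, n)) :
  (forall j, X *m ebase j = Y *m ebase j) -> X = Y.
Proof.
by move=> XY; apply/matrixP => i j; have /colP/(_ i) := XY j; rewrite !mulmx_ebase !mxE.
Qed.

Variable d : K -> K.

Lemma dmod_derE n (D : 'cV[K]_n -> 'cV[K]_n) : dmod_der d D ->
  forall v, D v = map_mx d v + conn_mx D *m v.
Proof.
move=> [DD DZ] v; rewrite (additive_sum_ebase DD).
under eq_bigr do rewrite DZ -(col_conn_mx D) -mulmx_ebase scalemxAr.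
rewrite big_split /= -mulmx_sumr sum_ebase; congr (_ + _).
by rewrite -[in RHS](sum_ebase (map_mx d v)); apply: eq_bigr => k _; rewrite mxE.
Qed.

Lemma tensor_derE n (D : 'cV[K]_n -> 'cV[K]_n) (T : 'M[K]_n) :
  tensor_der d D T = tensor_der_mx d (conn_mx D) T.
Proof.
have De i : D (ebase i) = conn_mx D *m ebase i by rewrite mulmx_ebase col_conn_mx.
have ebaseT i j : ebase i *m (ebase j)^T = delta_mx i j :> 'M[K]_n.
  by rewrite /ebase trmx_delta mul_delta_mx.
rewrite /tensor_der /tensor_der_mx.
under eq_bigr do under eq_bigr do
  rewrite !De ebaseT trmx_mul -mulmxA ebaseT mulmxA ebaseT scalerDr
          (scalemxAr _ (conn_mx D)) scalemxAl.
under eq_bigr do rewrite !big_split /= -mulmx_sumr -mulmx_suml.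
rewrite !big_split /= -mulmx_sumr -mulmx_suml -matrix_sum_delta addrA.
congr (_ + _ + _); rewrite [RHS]matrix_sum_delta.
by under [RHS]eq_bigr do under eq_bigr do rewrite mxE.
Qed.

Lemma det_derE n (D : 'cV[K]_n -> 'cV[K]_n) (c : K) :
  det_der d D c = d c + c * \tr (conn_mx D).
Proof.
rewrite /det_der /mxtrace; congr (_ + _ * _); apply: eq_bigr => k _.
rewrite (expand_det_row _ k) (bigD1 k) //= big1 ?addr0 => [|j hj].
  rewrite !mxE eqxx /cofactor -signr_odd addnn odd_double expr0 mul1r.
  suff -> : row' k (col' k (\matrix_(i, j) (if j == k then D (ebase k) i 0
                                           else (1%:M : 'M[K]_n) i j))) = 1%:M.
    by rewrite det1 mulr1.
  apply/matrixP => a b; rewrite !mxE eq_sym (negbTE (neq_lift k b)).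
  by rewrite (inj_eq lift_inj).
by rewrite !mxE (negbTE hj) eq_sym (negbTE hj) mul0r.
Qed.

End ConnectionMatrix.

Section QuadraticForms.

Variable K : fieldType.

Lemma nondeg_formP n (F : 'M[K]_n) : nondeg_form F <-> F \in unitmx.
Proof.
split => [hF | Fu a ha].
  rewrite -row_free_unit; apply: inj_row_free => v hv; apply: hF => b.
  by rewrite /sform hv !mul0mx mxE.
suff aF0 : a *m F = 0 by rewrite -(mulmxK Fu a) aF0 mul0mx.
apply/rowP => j; have := ha (delta_mx 0 j).
by rewrite /sform trmx_delta -colE !mxE.
Qed.

Lemma totally_isotropicP n (F W : 'M[K]_n) : totally_isotropic F W <-> W *m F *m W^T = 0.
Proof.
split => [hW | hW0 a b /submxP [x ->] /submxP [y ->]].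
  apply/matrixP => i j; rewrite [RHS]mxE.
  rewrite -(hW _ _ (row_sub i W) (row_sub j W)) /sform !mxE; apply: eq_bigr => k _.
  by rewrite !mxE; congr (_ * _); apply: eq_bigr => l _; rewrite !mxE.
rewrite /sform trmx_mul.
have -> : x *m W *m F *m (W^T *m y^T) = x *m (W *m F *m W^T) *m y^T by rewrite !mulmxA.
by rewrite hW0 mulmx0 mul0mx mxE.
Qed.

(* Complete the isotropic rows [Wb] by a dual isotropic family [Z]: start from any
   [Y] with [Wb F Y^T = 1] and correct it by half of [Y F Y^T]. *)
Lemma hyperbolic_basis m (F : 'M[K]_(m + m)) (Wb : 'M[K]_(m, m + m)) :
  (2 : K) != 0 -> F^T = F -> F \in unitmx -> row_free Wb -> Wb *m F *m Wb^T = 0 ->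
  exists Q : 'M[K]_(m + m), Q *m F *m Q^T = block_mx 0 1%:M 1%:M 0.
Proof.
move=> h2 FT Fu Wfree Wiso.
have trK (B C : 'M[K]_(m, m + m)) : B *m F *m C^T = 1%:M -> C *m F *m B^T = 1%:M.
  by move=> e; apply: trmx_inj; rewrite trmx1 !trmx_mul trmxK FT mulmxA e.
have WFfull : row_full (Wb *m F)^T.
  by rewrite /row_full mxrank_tr mxrankMfree // row_free_unit.
have [Y hY] := row_fullP WFfull.
have WY : Wb *m F *m Y^T = 1%:M by rewrite -[Wb *m F]trmxK -trmx_mul hY trmx1.
pose S := Y *m F *m Y^T.
have ST : S^T = S by rewrite !trmx_mul trmxK FT mulmxA.
pose Z := Y - 2^-1 *: (S *m Wb).
have WZ : Wb *m F *m Z^T = 1%:M.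
  rewrite linearB /= linearZ /= trmx_mul mulmxBr WY -scalemxAr mulmxA Wiso.
  by rewrite mul0mx scaler0 subr0.
have ZZ : Z *m F *m Z^T = 0.
  rewrite linearB /= linearZ /= trmx_mul ST mulmxBr -scalemxAr mulmxA (trK _ _ WZ).
  rewrite mul1mx mulmxBl mulmxBl -!scalemxAl -(mulmxA (S *m Wb)) -(mulmxA S).
  rewrite (mulmxA Wb) WY mulmx1 -/S -[X in X - _ - _]scale1r -!scalerBl.
  suff -> : 1 - 2^-1 - 2^-1 = 0 :> K by rewrite scale0r.
  by field.
exists (col_mx Wb Z).
by rewrite tr_col_mx mul_col_mx mul_col_row Wiso WZ (trK _ _ WZ) ZZ.
Qed.

Lemma hyperbolic_pid_isotropic m :
  pid_mx m *m block_mx 0 1%:M 1%:M 0 *m (pid_mx m : 'M[K]_(m + m))^T = 0 :> 'M[K]_(m + m).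
Proof.
rewrite (pid_mx_block K m m m) tr_block_mx !mulmx_block.
by rewrite !(mul0mx, mulmx0, trmx0, addr0) block_mx0.
Qed.

End QuadraticForms.

Section ExteriorSquare.

Variable K : fieldType.

Definition nat_entry m n (A : 'M[K]_(m.+1, n.+1)) (i j : nat) : K :=
  A (inord i) (inord j).
Arguments nat_entry : simpl never.

Lemma nat_entryE m n (A : 'M[K]_(m.+1, n.+1)) i j : A i j = nat_entry A i j.
Proof. by rewrite /nat_entry !inord_val. Qed.

(* Coordinates on Lambda^2 K^4 in the basis e01, e02, e03, e23, -e13, e12, in
   which the wedge pairing Lambda^2 x Lambda^2 -> Lambda^4 is [wedge_form]. *)
Definition alt2_entry (v : 'cV[K]_6) (i j : nat) : K :=
  let v := fun k => nat_entry v k 0 in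
  match i, j with
  | 0, 1 => v 0%N | 1, 0 => - v 0%N
  | 0, 2 => v 1%N | 2, 0 => - v 1%N
  | 0, 3 => v 2%N | 3, 0 => - v 2%N
  | 2, 3 => v 3%N | 3, 2 => - v 3%N
  | 1, 3 => - v 4%N | 3, 1 => v 4%N
  | 1, 2 => v 5%N | 2, 1 => - v 5%N
  | _, _ => 0 end.

Definition alt2 (v : 'cV[K]_6) : 'M[K]_4 := \matrix_(i, j) alt2_entry v i j.

Definition alt2_coord (T : 'M[K]_4) : 'cV[K]_6 :=
  \col_(i < 6) match (i : nat) with
  | 0 => nat_entry T 0 1 | 1 => nat_entry T 0 2 | 2 => nat_entry T 0 3
  | 3 => nat_entry T 2 3 | 4 => - nat_entry T 1 3 | _ => nat_entry T 1 2 end.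

Definition wedge_form : 'M[K]_6 :=
  \matrix_(i, j) if ((i : nat) + 3 == j)%N || ((j : nat) + 3 == i)%N then 1 else 0.

Definition lambda2_entry (B : 'M[K]_4) (i j : nat) : K :=
  let b := nat_entry B in
  match i, j with
  | 0,0 => b 0 0 + b 1 1 | 0,1 => b 1 2 | 0,2 => b 1 3 | 0,3 => 0 | 0,4 => b 0 3 | 0,_ => - b 0 2
  | 1,0 => b 2 1 | 1,1 => b 0 0 + b 2 2 | 1,2 => b 2 3 | 1,3 => - b 0 3 | 1,4 => 0 | 1,_ => b 0 1
  | 2,0 => b 3 1 | 2,1 => b 3 2 | 2,2 => b 0 0 + b 3 3 | 2,3 => b 0 2 | 2,4 => - b 0 1 | 2,_ => 0
  | 3,0 => 0 | 3,1 => - b 3 0 | 3,2 => b 2 0 | 3,3 => b 2 2 + b 3 3 | 3,4 => - b 2 1 | 3,_ => - b 3 1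
  | 4,0 => b 3 0 | 4,1 => 0 | 4,2 => - b 1 0 | 4,3 => - b 1 2 | 4,4 => b 1 1 + b 3 3 | 4,_ => - b 3 2
  | _,0 => - b 2 0 | _,1 => b 1 0 | _,2 => 0 | _,3 => - b 1 3 | _,4 => - b 2 3 | _,_ => b 1 1 + b 2 2
  end.
Definition lambda2_mx (B : 'M[K]_4) : 'M[K]_6 := \matrix_(i, j) lambda2_entry B i j.

Ltac case4 i := case: i => [[|[|[|[|?]]]] ?] //.
Ltac case6 i := case: i => [[|[|[|[|[|[|?]]]]]] ?] //.
Ltac entries := rewrite /= /nat_entry ?(mxE, big_ord_recl, big_ord0) ?inordK //=
  ?nat_entryE /= ?inordK //= /bump /= ?addn0 ?add1n.

Lemma alt2_lambda2 (B : 'M[K]_4) (v : 'cV[K]_6) :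
  alt2 (lambda2_mx B *m v) = B *m alt2 v + alt2 v *m B^T.
Proof. apply/matrixP => i j; rewrite !mxE; case4 i; case4 j; entries; ring. Qed.

Lemma lambda2_wedge_form (B : 'M[K]_4) :
  lambda2_mx B *m wedge_form + wedge_form *m (lambda2_mx B)^T = \tr B *: wedge_form.
Proof. apply/matrixP => i j; rewrite !mxE /mxtrace; case6 i; case6 j; entries; ring. Qed.

Lemma wedge_form_sqr : wedge_form *m wedge_form = 1%:M.
Proof. apply/matrixP => i j; rewrite !mxE; case6 i; case6 j; entries; ring. Qed.

Lemma tr_wedge_form : wedge_form^T = wedge_form.
Proof. by apply/matrixP => i j; rewrite !mxE; case6 i; case6 j. Qed.

Lemma wedge_form_block : block_mx 0 1%:M 1%:M 0 = wedge_form :> 'M[K]_(3 + 3).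
Proof.
apply/matrixP => i j; rewrite -(splitK i) -(splitK j).
case: (split i) => i'; case: (split j) => j' /=;
  rewrite ?block_mxEul ?block_mxEur ?block_mxEdl ?block_mxEdr !mxE /=;
  by case: i' => [[|[|[|?]]] ?] //; case: j' => [[|[|[|?]]] ?].
Qed.

Lemma alt2_coordK : cancel alt2 alt2_coord.
Proof. move=> v; apply/matrixP => i j; rewrite !mxE (ord1 j); case6 i; entries; ring. Qed.

Lemma alt2_inj : injective alt2.
Proof. exact: can_inj alt2_coordK. Qed.

Lemma alt2_alt (v : 'cV[K]_6) : is_alt2 (alt2 v).
Proof. apply/matrixP => i j; rewrite !mxE; case4 i; case4 j; entries; ring. Qed.

Lemma alt2_linear (a : K) (u v : 'cV[K]_6) : alt2 (a *: u + v) = a *: alt2 u + alt2 v.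
Proof. apply/matrixP => i j; rewrite !mxE; case4 i; case4 j; entries; ring. Qed.

Lemma alt2_coord_linear (a : K) (T U : 'M[K]_4) :
  alt2_coord (a *: T + U) = a *: alt2_coord T + alt2_coord U.
Proof. apply/matrixP => i j; rewrite !mxE; case6 i; entries; ring. Qed.

Lemma alt2K (T : 'M[K]_4) : (2 : K) != 0 -> is_alt2 T -> alt2 (alt2_coord T) = T.
Proof.
move=> h2 /matrixP TT.
have Tji i j : nat_entry T j i = - nat_entry T i j.
  by have := TT (inord i) (inord j); rewrite !mxE.
have Tii i : nat_entry T i i = 0.
  have /eqP := Tji i i; rewrite -subr_eq0 opprK -mulr2n -mulr_natl mulf_eq0.
  by rewrite (negbTE h2) => /eqP.
apply/matrixP => i j; rewrite !mxE; case4 i; case4 j; entries;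
  by rewrite ?Tii // Tji opprK.
Qed.

Lemma map_alt2 (f : K -> K) : f 0 = 0 -> (forall x, f (- x) = - f x) ->
  forall v, map_mx f (alt2 v) = alt2 (map_mx f v).
Proof.
move=> f0 fN v; apply/matrixP => i j; rewrite !mxE.
by case4 i; case4 j; rewrite /= /nat_entry ?mxE ?fN.
Qed.

Definition wedge_partner (k : nat) : nat :=
  match k with 0 => 3 | 1 => 4 | 2 => 5 | 3 => 0 | 4 => 1 | _ => 2 end.

Lemma so_wedge_form_entries (A : 'M[K]_6) :
  A *m wedge_form + wedge_form *m A^T = 0 ->
  forall i j, (i < 6)%N -> (j < 6)%N ->
  nat_entry A i (wedge_partner j) + nat_entry A j (wedge_partner i) = 0.
Proof.
move=> H i j hi hj; move: (congr1 (fun M : 'M[K]_6 => nat_entry M i j) H).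
case: i hi => [|[|[|[|[|[|i]]]]]] hi //; case: j hj => [|[|[|[|[|[|j]]]]]] hj //.
all: entries; move=> e; rewrite -e; ring.
Qed.

Definition lambda2_inv_entry (A : 'M[K]_6) (i j : nat) : K :=
  let a := nat_entry A in
  let b0 := (a 0 0 + a 1 1 + a 2 2) / 2 in
  match i, j with
  | 0,0 => b0 | 0,1 => a 1 5 | 0,2 => - a 0 5 | 0,_ => a 0 4
  | 1,0 => a 5 1 | 1,1 => a 0 0 - b0 | 1,2 => a 0 1 | 1,_ => a 0 2
  | 2,0 => a 3 2 | 2,1 => a 1 0 | 2,2 => a 1 1 - b0 | 2,_ => a 1 2
  | _,0 => a 4 0 | _,1 => a 2 0 | _,2 => a 2 1 | _,_ => a 2 2 - b0
  end.
Definition lambda2_inv (A : 'M[K]_6) : 'M[K]_4 := \matrix_(i, j) lambda2_inv_entry A i j.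

Lemma so_wedge_form_lambda2 (A : 'M[K]_6) : (2 : K) != 0 ->
  A *m wedge_form + wedge_form *m A^T = 0 ->
  A = lambda2_mx (lambda2_inv A) /\ \tr (lambda2_inv A) = 0.
Proof.
move=> h2 /so_wedge_form_entries hc.
have twice0 (x : K) : x + x = 0 -> x = 0.
  by rewrite -mulr2n -mulr_natl => /eqP; rewrite mulf_eq0 (negbTE h2) => /eqP.
have oppE (x y : K) : x + y = 0 -> x = - y by move=> e; apply/eqP; rewrite -addr_eq0 e.
have r03 := twice0 _ (hc 0 0 isT isT).
have r14 := twice0 _ (hc 1 1 isT isT).
have r25 := twice0 _ (hc 2 2 isT isT).
have r30 := twice0 _ (hc 3 3 isT isT).
have r41 := twice0 _ (hc 4 4 isT isT).
have r52 := twice0 _ (hc 5 5 isT isT).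
have r13 := oppE _ _ (hc 1 0 isT isT).
have r23 := oppE _ _ (hc 2 0 isT isT).
have r24 := oppE _ _ (hc 2 1 isT isT).
have r31 := oppE _ _ (hc 3 4 isT isT).
have r33 := oppE _ _ (hc 3 0 isT isT).
have r34 := oppE _ _ (hc 3 1 isT isT).
have r35 := oppE _ _ (hc 3 2 isT isT).
have r42 := oppE _ _ (hc 4 5 isT isT).
have r43 := oppE _ _ (hc 4 0 isT isT).
have r44 := oppE _ _ (hc 4 1 isT isT).
have r45 := oppE _ _ (hc 4 2 isT isT).
have r50 := oppE _ _ (hc 5 3 isT isT).
have r53 := oppE _ _ (hc 5 0 isT isT).
have r54 := oppE _ _ (hc 5 1 isT isT).
have r55 := oppE _ _ (hc 5 2 isT isT).
simpl in *.
split; last by rewrite /mxtrace; entries; field.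
apply/matrixP => i j; rewrite !mxE; case6 i; case6 j; entries.
all: rewrite ?r03 ?r14 ?r25 ?r30 ?r41 ?r52 ?r13 ?r23 ?r24 ?r31 ?r33 ?r34 ?r35
             ?r42 ?r43 ?r44 ?r45 ?r50 ?r53 ?r54 ?r55.
all: by clear -h2; field.
Qed.

End ExteriorSquare.

HB.instance Definition _ (K : fieldType) :=
  GRing.isLinear.Build K 'cV[K]_6 'M[K]_4 *:%R (@alt2 K) (@alt2_linear K).
HB.instance Definition _ (K : fieldType) :=
  GRing.isLinear.Build K 'M[K]_4 'cV[K]_6 *:%R (@alt2_coord K) (@alt2_coord_linear K).

Section ExteriorSquareDerivation.

Variables (K : fieldType) (d : K -> K).
Hypothesis hd : derivation d.

Lemma der_wedge_form : map_mx d (wedge_form K) = 0.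
Proof.
apply/matrixP => i j; rewrite !mxE.
by case: (_ || _); rewrite ?(derivation1 hd) ?(derivation0 hd).
Qed.

Lemma tensor_der_mx_wedge_form (B : 'M[K]_4) :
  tensor_der_mx d (lambda2_mx B) (wedge_form K) = \tr B *: wedge_form K.
Proof. by rewrite /tensor_der_mx der_wedge_form add0r lambda2_wedge_form. Qed.

Lemma tensor_der_mx_alt2 (B : 'M[K]_4) (v : 'cV[K]_6) :
  tensor_der_mx d B (alt2 v) = alt2 (map_mx d v + lambda2_mx B *m v).
Proof.
rewrite /tensor_der_mx (map_alt2 (derivation0 hd) (derivationN hd)) -addrA.
by rewrite -alt2_lambda2 linearD.
Qed.

Lemma dmod_der_conn n (B : 'M[K]_n) : dmod_der d (fun v => map_mx d v + B *m v).
Proof.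
split => [u v | a u]; first by rewrite der_mxD // mulmxDr addrACA.
by rewrite der_mxZ // -scalemxAr scalerDr addrA.
Qed.

Lemma conn_mx_conn n (B : 'M[K]_n) : conn_mx (fun v => map_mx d v + B *m v) = B.
Proof.
by apply/matrixP => i j; rewrite mxE /ebase der_mx_delta // add0r -colE mxE.
Qed.

Lemma iso_to_Lambda2P (DM : 'cV[K]_6 -> 'cV[K]_6) (DN : 'cV[K]_4 -> 'cV[K]_4) :
  (2 : K) != 0 -> dmod_der d DM ->
  iso_to_Lambda2 d DM DN <->
  exists2 P : 'M[K]_6, P \in unitmx &
    lambda2_mx (conn_mx DN) *m P = P *m conn_mx DM - map_mx d P.
Proof.
move=> h2 hDM; split => [[phi [phi_lin [phi_inj [phi_alt [_ phi_der]]]]] | [P Pu hP]].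
  pose psi u := alt2_coord (phi u).
  have psi_lin a u v : psi (a *: u + v) = a *: psi u + psi v.
    by rewrite /psi phi_lin linearP.
  pose P := conn_mx psi.
  have phiP u : phi u = alt2 (P *m u) by rewrite -(linear_conn_mx psi_lin) alt2K.
  exists P.
    rewrite -unitmx_tr -row_free_unit; apply: inj_row_free => v vP0.
    have : phi v^T = phi 0 by rewrite !phiP -[P]trmxK -trmx_mul vP0 trmx0 mulmx0.
    by move/phi_inj => vT0; rewrite -[v]trmxK vT0 trmx0.
  apply: mx_ebaseP => j; have := phi_der (ebase j).
  rewrite (dmod_derE hDM) der_mx_delta // add0r !phiP tensor_derE tensor_der_mx_alt2.
  move/alt2_inj; rewrite der_mxM // der_mx_delta // mulmx0 addr0 => e.
  by rewrite mulmxBl -!mulmxA e addrAC subrr add0r.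
exists (fun u => alt2 (P *m u)); split.
  by move=> a u v; rewrite mulmxDr -scalemxAr linearP.
split; first by move=> u v /alt2_inj /(can_inj (mulKmx Pu)).
split; first by move=> u; apply: alt2_alt.
split; first by move=> T hT; exists (invmx P *m alt2_coord T); rewrite mulKVmx // alt2K.
move=> u; rewrite (dmod_derE hDM) tensor_derE tensor_der_mx_alt2 der_mxM // mulmxA hP.
by rewrite mulmxDr mulmxBl mulmxA addrAC (addrC (map_mx d P *m u)) subrK addrC.
Qed.

End ExteriorSquareDerivation.

Section SplitForm.

Variables (K : fieldType) (d : K -> K).
Hypothesis hd : derivation d.
Hypothesis h2 : (2 : K) != 0.

Lemma wedge_form_unit : wedge_form K \in unitmx.
Proof. by case: (mulmx1_unit (wedge_form_sqr K)). Qed.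

Lemma wedge_form_congruent (F W : 'M[K]_6) :
  F^T = F -> F \in unitmx -> \rank W = 3%N -> W *m F *m W^T = 0 ->
  exists Q : 'M[K]_6, Q *m F *m Q^T = wedge_form K.
Proof.
move=> FT Fu rW WFW.
have [Wb Wfree WbF] : exists2 Wb : 'M[K]_(3, 6), row_free Wb & Wb *m F *m Wb^T = 0.
  move: (row_base W) (row_base_free W) (eq_row_base W); rewrite rW => Wb Wfree eWb.
  exists Wb => //; have /submxP [X ->] : (Wb <= W)%MS by rewrite eWb.
  by rewrite trmx_mul !mulmxA -(mulmxA X) -(mulmxA X) WFW mulmx0 mul0mx.
have [Q QFQ] := @hyperbolic_basis K 3 F Wb h2 FT Fu Wfree WbF.
by exists Q; rewrite -wedge_form_block.
Qed.

Lemma split_form_of_Lambda2 (DM : 'cV[K]_6 -> 'cV[K]_6) (DN : 'cV[K]_4 -> 'cV[K]_4) :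
  dmod_der d DM -> det_trivial d DN -> iso_to_Lambda2 d DM DN ->
  exists F : 'M[K]_6,
    is_sym2 F /\ tensor_der d DM F = 0 /\ nondeg_form F /\
    exists W : 'M[K]_6, \rank W = 3%N /\ totally_isotropic F W.
Proof.
move=> hDM [c [c0 hc]] /(iso_to_Lambda2P hd _ h2 hDM) [P Pu hP].
rewrite det_derE in hc.
pose S := invmx P; pose G := S *m wedge_form K *m S^T.
have PGP : P *m G *m P^T = wedge_form K.
  by rewrite !mulmxA mulmxV // mul1mx -mulmxA -trmx_mul mulmxV // trmx1 mulmx1.
have SPK X : S *m (P *m X *m P^T) *m S^T = X.
  by rewrite !mulmxA mulVmx // mul1mx -mulmxA -trmx_mul mulVmx // trmx1 mulmx1.
(* [G] is the wedge pairing of [Lambda^2 N] transported to [M]; it is horizontal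
   up to the trace of the connection of [N]. *)
have tG : tensor_der_mx d (conn_mx DM) G = \tr (conn_mx DN) *: G.
  have := tensor_der_mx_gauge hd G hP; rewrite PGP (tensor_der_mx_wedge_form hd) => e.
  by rewrite -[LHS]SPK -e -scalemxAr -scalemxAl.
exists (c *: G); split.
  by rewrite /is_sym2 linearZ /= !trmx_mul trmxK tr_wedge_form mulmxA.
split; first by rewrite tensor_derE (tensor_der_mxZ hd) tG scalerA -scalerDl hc scale0r.
split.
  apply/nondeg_formP; rewrite unitmxZ ?unitfE // !unitmx_mul unitmx_tr unitmx_inv.
  by rewrite Pu wedge_form_unit.
pose W : 'M[K]_6 := pid_mx 3 *m P.
exists W; split; first by rewrite mxrankMfree ?row_free_unit // rank_pid_mx.
apply/totally_isotropicP.
have -> : W *m (c *: G) *m W^T = c *: (pid_mx 3 *m (P *m G *m P^T) *m (pid_mx 3)^T).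
  by rewrite trmx_mul -scalemxAr -scalemxAl !mulmxA.
have := hyperbolic_pid_isotropic K 3; rewrite wedge_form_block => pJ0.
by rewrite PGP pJ0 scaler0.
Qed.

Lemma Lambda2_of_split_form (DM : 'cV[K]_6 -> 'cV[K]_6) (F W : 'M[K]_6) :
  dmod_der d DM -> is_sym2 F -> tensor_der d DM F = 0 -> nondeg_form F ->
  \rank W = 3%N -> totally_isotropic F W ->
  exists DN : 'cV[K]_4 -> 'cV[K]_4,
    dmod_der d DN /\ det_trivial d DN /\ iso_to_Lambda2 d DM DN.
Proof.
move=> hDM FT hF /nondeg_formP Fu rW /totally_isotropicP WFW.
have [Q QFQ] := wedge_form_congruent FT Fu rW WFW.
pose P := wedge_form K *m Q.
have RP : F *m Q^T *m P = 1%:M.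
  by apply: mulmx1C; rewrite -!mulmxA (mulmxA Q) QFQ wedge_form_sqr.
have PFP : P *m F *m P^T = wedge_form K.
  have -> : P *m F *m P^T = wedge_form K *m (Q *m F *m Q^T) *m (wedge_form K)^T.
    by rewrite trmx_mul !mulmxA.
  by rewrite QFQ tr_wedge_form wedge_form_sqr mul1mx.
pose A' := (P *m conn_mx DM - map_mx d P) *m (F *m Q^T).
have hA' : A' *m P = P *m conn_mx DM - map_mx d P by rewrite -mulmxA RP mulmx1.
(* In the basis given by [P] the form becomes the constant [wedge_form], so the
   connection matrix [A'] lies in its orthogonal Lie algebra. *)
have soA' : A' *m wedge_form K + wedge_form K *m A'^T = 0.
  have := tensor_der_mx_gauge hd F hA'.
  by rewrite PFP -tensor_derE hF mulmx0 mul0mx /tensor_der_mx (der_wedge_form hd) add0r.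
have [A'L trB] := so_wedge_form_lambda2 h2 soA'.
exists (fun v => map_mx d v + lambda2_inv A' *m v).
split; first exact: dmod_der_conn.
split.
  exists 1; split; first exact: oner_neq0.
  by rewrite det_derE (conn_mx_conn hd) (derivation1 hd) add0r mul1r; exact: trB.
apply/(iso_to_Lambda2P hd _ h2 hDM); exists P.
  by case: (mulmx1_unit RP).
by rewrite (conn_mx_conn hd) -[lambda2_mx _]A'L.
Qed.

End SplitForm.

Theorem theorem4p1 (K : fieldType) (d : K -> K)
    (hd : derivation d) (hchar : [pchar K] =i pred0)
    (DM : 'cV[K]_6 -> 'cV[K]_6) (hDM : dmod_der d DM) :
  (exists DN : 'cV[K]_4 -> 'cV[K]_4,
      dmod_der d DN /\ det_trivial d DN /\ iso_to_Lambda2 d DM DN)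
  <->
  (exists F : 'M[K]_6,
      is_sym2 F /\ tensor_der d DM F = 0 /\ nondeg_form F /\
      exists W : 'M[K]_6, \rank W = 3%N /\ totally_isotropic F W).
Proof.
have h2 : (2 : K) != 0 by move/(pcharf0P K): hchar => ->.
split => [[DN [_ [hdet hiso]]] | [F [FT [hF [hnd [W [rW hiso]]]]]]].
  exact: (split_form_of_Lambda2 hd h2 hDM hdet hiso).
exact: (Lambda2_of_split_form hd h2 hDM FT hF hnd rW hiso).
Qed.
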